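(* Let $p$ be a prime, let $V:=\{v_F: F\subseteq[4p],\ |F|=2p\}\subseteq\{0,1\}^{4p}\subseteq\mathbb{F}_p^{4p}$, let $C\subseteq[4p]$ with $|C|=3p$, and put $Q:=V\cup\{v_C\}$. If $y\in\mathrm{Sm}(\prec_{deg},Q)\setminus\mathrm{Sm}(\prec_{deg},V)$, then $\deg y\ge p$.
   Context: $[m]=\{1,\dots,m\}$; $v_F\in\{0,1\}^{4p}$ is the characteristic vector of $F$. Polynomials are in $\mathbb{F}_p[x_1,\ldots,x_{4p}]$. $\prec_{deg}$ is the deglex order (compare degrees first, ties broken lexicographically with $x_{4p}\prec\cdots\prec x_1$). $\mathrm{Sm}(\prec,X)$ is the set of monomials that are not the $\prec$-leading monomial of any nonzero polynomial over $\mathbb{F}_p$ vanishing on $X$. *)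

From HB Require Import structures.
From mathcomp Require Import all_boot all_order all_algebra.
Set Implicit Arguments. Unset Strict Implicit. Unset Printing Implicit Defensive.
Import GRing.Theory.
Local Open Scope ring_scope.

(* Monomials in the variables x_1, ..., x_n: exponent vectors.
   Index i : 'I_n corresponds to the variable x_(i+1). *)
Definition monomial (n : nat) := {ffun 'I_n -> nat}.

Definition mdeg n (m : monomial n) : nat := (\sum_(i < n) m i)%N.

(* Lexicographic order with x_n < ... < x_1: compare exponents of x_1 first. *)
Definition lex_lt n (m m' : monomial n) : bool :=
  [exists i : 'I_n, (m i < m' i)%N && [forall j : 'I_n, (j < i)%N ==> (m j == m' j)]].

Definition deglex_lt n (m m' : monomial n) : bool :=
  (mdeg m < mdeg m')%N || ((mdeg m == mdeg m') && lex_lt m m').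

(* A polynomial in F[x_1..x_n] represented as a formal finite sum of terms
   (coefficient, monomial); the polynomial itself is given by [coef]. *)
Definition mpoly (F : fieldType) (n : nat) := seq (F * monomial n).

Definition coef (F : fieldType) n (P : mpoly F n) (m : monomial n) : F :=
  \sum_(t <- P | t.2 == m) t.1.

Definition meval (F : fieldType) n (P : mpoly F n) (x : 'I_n -> F) : F :=
  \sum_(t <- P) t.1 * \prod_(i < n) x i ^+ t.2 i.

Definition is_lead_deglex (F : fieldType) n (P : mpoly F n) (m : monomial n) : Prop :=
  coef P m != 0 /\ forall m', coef P m' != 0 -> m' = m \/ deglex_lt m' m.

Definition Sm_deglex (F : finFieldType) n (X : {set {ffun 'I_n -> F}}) (m : monomial n) : Prop :=
  ~ exists P : mpoly F n, is_lead_deglex P m /\ forall x, x \in X -> meval P x = 0.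

Definition charvec (F : fieldType) n (A : {set 'I_n}) : {ffun 'I_n -> F} :=
  [ffun i => (i \in A)%:R].

(* If P vanishes on V and its deglex-leading monomial y has degree < p, then so
   does every monomial of P, hence every monomial has support S with |S| < p.
   Fix Y ⊆ C with |Y| = 2p-1.  For such S, the number of p-subsets T of Y with
   S ⊆ C \ T is [S ⊆ C] * binomial(|Y \ S|, p), and p <= |Y \ S| <= 2p-1 makes
   that binomial 1 mod p.  Evaluating monomials at characteristic vectors thus
   gives P(v_C) = Σ_T P(v_(C\T)) in F_p, and each |C \ T| = 2p, so P vanishes on
   Q as well: y is not standard for Q either. *)
From mathcomp Require Import all_boot all_order all_algebra zify.
Set Implicit Arguments. Unset Strict Implicit. Unset Printing Implicit Defensive.
Import GRing.Theory.
Local Open Scope ring_scope.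

Lemma bin_addn_pchar (R : nzRingType) p r :
  p \in [pchar R] -> (r < p)%N -> 'C(p + r, p)%:R = 1 :> R.
Proof.
(* Vandermonde: C(p + r, p) = sum_k C(p, k) C(r, p - k); the term k = 0
   vanishes as r < p, the terms 0 < k < p are divisible by p, and k = p gives 1. *)
move=> pcharRp lt_rp; have p_pr := pcharf_prime pcharRp.
rewrite -binomial.Vandermonde natr_sum big_ord_recr /= subnn bin0 binn muln1.
case: p pcharRp p_pr lt_rp => // p' pcharRp p_pr lt_rp.
rewrite big_ord_recl /= (bin_small lt_rp) muln0 add0r big1 ?add0r // => i _.
have /dvdnP [q ->] : (p'.+1 %| 'C(p'.+1, bump 0 i))%N.
  by apply: prime_dvd_bin; rewrite // /bump /= add1n ltnS ltn_ord.
by rewrite !natrM (pcharf0 pcharRp) mulr0 mul0r.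
Qed.

Lemma sum_draws_subset_setD (R : nzRingType) p n (Y S C : {set 'I_n}) :
  p \in [pchar R] -> #|Y| = (2 * p).-1 -> (#|S| < p)%N ->
  \sum_(T in [set T : {set 'I_n} | T \subset Y & #|T| == p])
     (S \subset C :\: T)%:R = (S \subset C)%:R :> R.
Proof.
move=> pcharRp cardY ltSp.
have [SC|nSC] := boolP (S \subset C); last first.
  by rewrite big1 // => T _; rewrite subsetD (negbTE nSC).
have -> : \sum_(T in [set T : {set 'I_n} | T \subset Y & #|T| == p])
     (S \subset C :\: T)%:R =
   \sum_(T in [set T : {set 'I_n} | T \subset Y :\: S & #|T| == p]) 1 :> R.
  rewrite big_mkcond [RHS]big_mkcond; apply: eq_bigr => T _.
  rewrite !inE !subsetD SC disjoint_sym.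
  by case: (T \subset Y); case: [disjoint T & S]; case: (#|T| == p).
rewrite sumr_const cards_draws.
have cardYS : #|Y :\: S| = (p + (#|Y :\: S| - p))%N.
  have := cardsD Y S; have := subset_leq_card (subsetIr Y S).
  have := prime_gt0 (pcharf_prime pcharRp); lia.
rewrite cardYS bin_addn_pchar //.
have := leq_subr (#|Y :&: S|) #|Y|; rewrite -cardsD; lia.
Qed.

Definition msupp n (m : monomial n) : {set 'I_n} := [set i | m i != 0%N].

Lemma card_msupp_le n (m : monomial n) : (#|msupp m| <= mdeg m)%N.
Proof.
rewrite /mdeg -sum1_card [X in (_ <= X)%N](bigID (mem (msupp m))) /=.
by apply: leq_trans (leq_addr _ _); apply: leq_sum => i; rewrite inE lt0n.
Qed.

Lemma charvec_monomialE (F : fieldType) n (A : {set 'I_n}) (m : monomial n) :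
  \prod_(i < n) charvec F A i ^+ m i = (msupp m \subset A)%:R.
Proof.
have [suppA|] := boolP (msupp m \subset A).
  apply: big1 => i _; rewrite ffunE.
  have [->|mi] := eqVneq (m i) 0%N; first by rewrite expr0.
  by rewrite (subsetP suppA) ?inE // expr1n.
case/subsetPn => i; rewrite inE => mi iA.
by rewrite (bigD1 i) //= ffunE (negbTE iA) expr0n (negbTE mi) mul0r.
Qed.

Lemma meval_coefE (F : fieldType) n (P : mpoly F n) (x : 'I_n -> F) :
  meval P x = \sum_(m <- undup [seq t.2 | t <- P]) coef P m * \prod_(i < n) x i ^+ m i.
Proof.
rewrite /meval; under [RHS]eq_bigr do rewrite /coef mulr_suml.
rewrite (exchange_big_dep xpredT) //=; apply: eq_big_seq => t tP.
set c := _ * _; rewrite [RHS](eq_bigr (fun=> c)) => [|m /eqP <- //].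
rewrite big_const_seq -(eq_count (fun m => eq_sym m t.2)).
by rewrite count_uniq_mem ?undup_uniq // mem_undup map_f //= addr0.
Qed.

Lemma meval_charvec_sum_draws (F : fieldType) p n (P : mpoly F n) (C Y : {set 'I_n}) :
  p \in [pchar F] -> #|Y| = (2 * p).-1 ->
  (forall m, coef P m != 0 -> (#|msupp m| < p)%N) ->
  meval P (charvec F C) =
    \sum_(T in [set T : {set 'I_n} | T \subset Y & #|T| == p]) meval P (charvec F (C :\: T)).
Proof.
move=> pcharFp cardY small_supp.
under [RHS]eq_bigr do rewrite meval_coefE.
rewrite meval_coefE exchange_big /=; apply: eq_bigr => m _.
rewrite -mulr_sumr charvec_monomialE.
have [->|/small_supp ltSp] := eqVneq (coef P m) 0; first by rewrite !mul0r.
rewrite -(sum_draws_subset_setD C pcharFp cardY ltSp).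
by congr (_ * _); apply: eq_bigr => T _; rewrite charvec_monomialE.
Qed.

Lemma mdeg_le_lead (F : fieldType) n (P : mpoly F n) (y m : monomial n) :
  is_lead_deglex P y -> coef P m != 0 -> (mdeg m <= mdeg y)%N.
Proof.
case=> _ /[apply] -[->//|]; rewrite /deglex_lt.
by case/orP => [/ltnW|/andP [/eqP -> _]].
Qed.

Lemma exists_subset_card (T : finType) (A : {set T}) k :
  (k <= #|A|)%N -> exists2 B : {set T}, B \subset A & #|B| = k.
Proof.
rewrite -bin_gt0 -cards_draws => /card_gt0P [B].
by rewrite inE => /andP [BA /eqP cardB]; exists B.
Qed.

Theorem mainTheorem11 (p : nat) (hp : prime p) (C : {set 'I_(4 * p)})
  (hC : #|C| = (3 * p)%N) (y : monomial (4 * p)) :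
  let V : {set {ffun 'I_(4 * p) -> 'F_p}} :=
    [set charvec 'F_p A | A : {set 'I_(4 * p)} & #|A| == (2 * p)%N] in
  let Q : {set {ffun 'I_(4 * p) -> 'F_p}} := charvec 'F_p C |: V in
  Sm_deglex Q y -> ~ Sm_deglex V y -> (p <= mdeg y)%N.
Proof.
move=> V Q SmQ nSmV; rewrite leqNgt; apply/negP => lt_yp.
apply: nSmV => -[P [leadP vanishV]]; apply: SmQ; exists P; split=> // x.
rewrite in_setU1 => /orP [/eqP ->|]; last exact: vanishV.
have [Y YC cardY] : exists2 Y : {set 'I_(4 * p)}, Y \subset C & #|Y| = (2 * p).-1.
  by apply: exists_subset_card; rewrite hC; lia.
have small_supp m : coef P m != 0 -> (#|msupp m| < p)%N.
  move=> /(mdeg_le_lead leadP) le_my.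
  exact: leq_ltn_trans (card_msupp_le m) (leq_ltn_trans le_my lt_yp).
rewrite (meval_charvec_sum_draws C (pchar_Fp hp) cardY small_supp).
apply: big1 => T; rewrite inE => /andP [TY /eqP cardT]; apply: vanishV.
apply: imset_f; rewrite inE cardsD (setIidPr (subset_trans TY YC)) hC cardT.
by rewrite mulSn addKn.
Qed.
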